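(* Let $A$ be a set, $\to$ a binary relation on $A$, $\vdash\!\dashv$ a symmetric relation on $A$ with $\sim=(\vdash\!\dashv)^*$, and $>$ a well-founded order on $A$ with $\sim\cdot>\cdot\sim\subseteq>$. If $(A,\to)$ is source decreasing modulo $\sim$ (with respect to $>$), then it is Church–Rosser modulo $\sim$, i.e. $(\leftarrow\cup\to\cup\sim)^*\subseteq\to^*\cdot\sim\cdot\leftarrow^*$.
   Context: Labeled steps: $b\to^{a} c$ means $b\to c$ and $b\sim a$; $b\vdash\!\dashv^{a}c$ means $b\vdash\!\dashv c$ and $b\sim a$; a step $c\leftarrow^a b$ means $b\to^a c$. For $a\in A$, $\Leftrightarrow_{\vee a}^*$ denotes the relation of pairs connected by a finite sequence of steps $\to^{a'}$, $\leftarrow^{a'}$, $\vdash\!\dashv^{a'}$, each with some label $a'<a$. $(A,\to)$ is source decreasing modulo $\sim$ if for all $a,b,c\in A$: (i) if $a\to b$ and $a\to c$ then $(b,c)\in\Leftrightarrow_{\vee a}^*$; (ii) if $a\to b$ and $a\vdash\!\dashv c$ then $(b,c)\in \Leftrightarrow_{\vee a}^*\cdot(\leftarrow^{a})^{=}$ (the last step being either empty or a step $d\leftarrow^a c$). *)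

From Stdlib Require Export Relations.Relation_Definitions Relations.Relation_Operators.

Section ARS.
Variable A : Type.
Variable R : A -> A -> Prop.
Variable E : A -> A -> Prop.
Variable gt : A -> A -> Prop.

Definition sim : A -> A -> Prop := clos_refl_trans A E.

Definition lstep (a b c : A) : Prop := R b c /\ sim b a.
Definition lconv (a b c : A) : Prop := E b c /\ sim b a.

Definition step_below (a x y : A) : Prop :=
  exists a', gt a a' /\ (lstep a' x y \/ lstep a' y x \/ lconv a' x y).

Definition conv_below (a : A) : A -> A -> Prop := clos_refl_trans A (step_below a).

Definition source_decreasing_modulo : Prop :=
  (forall a b c, R a b -> R a c -> conv_below a b c) /\
  (forall a b c, R a b -> E a c ->
     exists d, conv_below a b d /\ (d = c \/ lstep a c d)).

Definition church_rosser_modulo : Prop :=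
  forall x y,
    clos_refl_trans A (fun u v => R v u \/ R u v \/ sim u v) x y ->
    exists u v, clos_refl_trans A R x u /\ sim u v /\ clos_refl_trans A R y v.
End ARS.

(* Label every step of a conversion by (a term ~-equivalent to) its source and
   measure the conversion by its list of labels, ordered by "replace one label by
   finitely many smaller ones"; this order is well founded because > is.  By
   induction on that measure a conversion is turned into a valley
   ->^* . |-|^* . <-^*: once the tail is a valley, the only obstacles at the head
   are a local peak <- . -> or a local cliff <- . |-| or |-| . ->, and source
   decreasingness replaces each of them by a conversion of smaller measure.
   Compatibility of > with ~ is what lets labels be compared only up to ~. *)
From Stdlib Require Import List Relations Wellfounded.Transitive_Closure.
Import ListNotations.

Section ListOrder.
Variable T : Type.
Variable lt : T -> T -> Prop.
Hypothesis lt_wf : well_founded lt.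

Definition replace_lt (l' l : list T) : Prop :=
  exists p a s m, l = p ++ a :: s /\ l' = p ++ m ++ s /\ Forall (fun b => lt b a) m.

Definition list_lt : list T -> list T -> Prop := clos_trans _ replace_lt.
Definition list_le : list T -> list T -> Prop := clos_refl_trans _ replace_lt.

Lemma Acc_replace_lt_cons a l : Acc replace_lt l -> Acc replace_lt (a :: l).
Proof.
  revert l; induction (lt_wf a) as [a _ IHa]; intros l Hl.
  induction Hl as [l Hl IHl]; constructor.
  intros l' (p & b & s & m & Heq & -> & Hm).
  destruct p as [|c p]; injection Heq as -> ->.
  - induction Hm as [|c m Hc _ IHm]; [constructor; assumption|].
    now apply IHa.
  - apply IHl. now exists p, b, s, m.
Qed.

Lemma replace_lt_wf : well_founded replace_lt.
Proof.
  intro l; induction l as [|a l IHl].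
  - constructor; intros l' (p & a & s & m & Hl & _); destruct p; discriminate.
  - now apply Acc_replace_lt_cons.
Qed.

Lemma list_lt_wf : well_founded list_lt.
Proof. exact (wf_clos_trans _ _ replace_lt_wf). Qed.

Lemma list_lt_head a m l : Forall (fun b => lt b a) m -> list_lt (m ++ l) (a :: l).
Proof. intro Hm; apply t_step; now exists [], a, l, m. Qed.

Lemma list_lt_app_l p l' l : list_lt l' l -> list_lt (p ++ l') (p ++ l).
Proof.
  induction 1 as [l' l (q & a & s & m & -> & -> & Hm)|]; [|eapply t_trans; eassumption].
  apply t_step; exists (p ++ q), a, s, m; now rewrite <- !app_assoc.
Qed.

Lemma list_lt_le_trans l1 l2 l3 : list_lt l1 l2 -> list_le l2 l3 -> list_lt l1 l3.
Proof.
  intros H12 H23; revert l1 H12.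
  induction H23 as [l2 l3 H| |l2 l3 l4 _ IH1 _ IH2]; intros l1 H12; auto.
  apply t_trans with l2; [|apply t_step]; assumption.
Qed.

Lemma list_le_cons a l' l : list_le l' l -> list_le (a :: l') (a :: l).
Proof.
  induction 1 as [l' l H| |]; [|apply rt_refl|eapply rt_trans; eassumption].
  apply clos_t_clos_rt, (list_lt_app_l [a]), t_step, H.
Qed.

Lemma list_lt_drop_second a b m l :
  Forall (fun c => lt c a) m -> list_lt (m ++ l) (a :: b :: l).
Proof.
  intro Hm; apply t_trans with (m ++ b :: l).
  - apply list_lt_app_l, (list_lt_head b []); constructor.
  - now apply list_lt_head.
Qed.
End ListOrder.

Arguments list_lt {T}.
Arguments list_le {T}.
Arguments list_lt_wf {T lt}.
Arguments list_lt_head {T lt}.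
Arguments list_lt_app_l {T lt}.
Arguments list_le_cons {T lt}.
Arguments list_lt_le_trans {T lt}.
Arguments list_lt_drop_second {T lt}.

Section LabelledPaths.
Variable A : Type.
Variable S : A -> A -> A -> Prop.

Inductive lpath : A -> A -> list A -> Prop :=
| lpath_nil x : lpath x x []
| lpath_cons a x y z l : S a x y -> lpath y z l -> lpath x z (a :: l).

Lemma lpath_app x y z l1 l2 : lpath x y l1 -> lpath y z l2 -> lpath x z (l1 ++ l2).
Proof. induction 1; intros; simpl; [|econstructor]; eauto. Qed.
End LabelledPaths.

Arguments lpath {A}.

Section ChurchRosserModulo.
Variable A : Type.
Variables R E gt : A -> A -> Prop.
Hypothesis E_sym : forall x y, E x y -> E y x.
Hypothesis gt_wf : well_founded (fun x y => gt y x).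
Hypothesis gt_compat : forall a b c d, sim A E a b -> gt b c -> sim A E c d -> gt a d.
Hypothesis peak_decreasing : forall a b c, R a b -> R a c -> conv_below A R E gt a b c.
Hypothesis cliff_decreasing : forall a b c, R a b -> E a c ->
  exists d, conv_below A R E gt a b d /\ (d = c \/ lstep A R E a c d).

Local Notation sim := (sim A E).
Local Notation lstep := (lstep A R E).
Local Notation lconv := (lconv A E).
Local Notation smaller := (fun x y => gt y x).
Local Notation list_lt := (list_lt smaller).
Local Notation list_le := (list_le smaller).

Lemma sim_sym x y : sim x y -> sim y x.
Proof.
  induction 1; [apply rt_step; auto|apply rt_refl|eapply rt_trans; eassumption].
Qed.

Lemma sim_E_r x y a : E x y -> sim x a -> sim y a.
Proof. intros Hxy Hxa; apply rt_trans with x; [apply rt_step, E_sym|]; assumption. Qed.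

Definition lconvstep (a x y : A) : Prop := lstep a x y \/ lstep a y x \/ lconv a x y.
Definition lconversion : A -> A -> list A -> Prop := lpath lconvstep.

Lemma lconvstep_sym a x y : lconvstep a x y -> lconvstep a y x.
Proof.
  intros [H|[H|[Hxy Hxa]]]; unfold lconvstep; auto.
  right; right; split; [apply E_sym|apply (sim_E_r x)]; assumption.
Qed.

Lemma conv_below_sym c x y : conv_below A R E gt c x y -> conv_below A R E gt c y x.
Proof.
  induction 1 as [x y (a & Hca & Hs)| |]; [|apply rt_refl|eapply rt_trans; eassumption].
  apply rt_step; exists a; split; [|apply lconvstep_sym]; assumption.
Qed.

Lemma conv_below_lconversion a c x y : sim a c -> conv_below A R E gt c x y ->
  exists m, lconversion x y m /\ Forall (gt a) m.
Proof.
  intros Hac; induction 1 as [x y (b & Hcb & Hs)|x|x y z _ [m1 [H1 F1]] _ [m2 [H2 F2]]].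
  - exists [b]; split; [econstructor; [exact Hs|constructor]|].
    constructor; [apply (gt_compat a c b b); [assumption..|apply rt_refl]|constructor].
  - exists []; split; constructor.
  - exists (m1 ++ m2); split; [eapply lpath_app|apply Forall_app]; eauto.
Qed.

Definition lbackstep (a x y : A) : Prop := lstep a y x.

Inductive modvalley : A -> A -> list A -> Prop :=
| modvalley_back x z l : lpath lbackstep x z l -> modvalley x z l
| modvalley_eq a x y z l : lconv a x y -> modvalley y z l -> modvalley x z (a :: l).

Inductive valley : A -> A -> list A -> Prop :=
| valley_mod x z l : modvalley x z l -> valley x z l
| valley_fwd a x y z l : lstep a x y -> valley y z l -> valley x z (a :: l).

Lemma modvalley_lconversion x z l : modvalley x z l -> lconversion x z l.
Proof.
  induction 1 as [x z l H|]; [induction H|]; econstructor; unfold lconvstep; eauto.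
Qed.

Lemma valley_lconversion x z l : valley x z l -> lconversion x z l.
Proof.
  induction 1; [apply modvalley_lconversion; assumption|].
  econstructor; unfold lconvstep; eauto.
Qed.

Definition reducible (l : list A) : Prop :=
  forall x z, lconversion x z l -> exists l', list_le l' l /\ valley x z l'.

Definition reducible_below (L : list A) : Prop := forall l, list_lt l L -> reducible l.

Lemma valley_below L l x z : reducible_below L -> list_lt l L ->
  lconversion x z l -> exists l', list_lt l' L /\ valley x z l'.
Proof.
  intros IH Hlt Hc; destruct (IH l Hlt x z Hc) as (l' & Hle & Hv).
  exists l'; split; [eapply clos_rt_t|]; eassumption.
Qed.

(* In the three local obstacles below, both labels [a] and [b] are ~ to the
   peak [y], so source decreasingness at [y] yields labels smaller than both. *)

Lemma peak_reduction a b x y y1 z l : reducible_below (a :: b :: l) ->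
  lstep a y x -> lstep b y y1 -> valley y1 z l ->
  exists l', list_lt l' (a :: b :: l) /\ valley x z l'.
Proof.
  intros IH [Hyx Hya] [Hyy1 _] Hv.
  destruct (conv_below_lconversion a y x y1) as (m & Hc & Hm);
    [apply sim_sym; assumption|apply peak_decreasing; assumption|].
  apply (valley_below _ (m ++ l)); [assumption|apply list_lt_drop_second, Hm|].
  eapply lpath_app; [|apply valley_lconversion]; eassumption.
Qed.

Lemma back_cliff_reduction a b x y y1 z l : reducible_below (a :: b :: l) ->
  lstep a y x -> lconv b y y1 -> modvalley y1 z l ->
  exists l', list_lt l' (a :: b :: l) /\ valley x z l'.
Proof.
  intros IH [Hyx Hya] [Hyy1 Hyb] Hv.
  destruct (cliff_decreasing y x y1 Hyx Hyy1) as (d & Hcb & Hd).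
  destruct (conv_below_lconversion a y x d) as (m & Hc & Hm);
    [apply sim_sym; assumption|assumption|].
  destruct Hd as [->|Hd].
  - apply (valley_below _ (m ++ l)); [assumption|apply list_lt_drop_second, Hm|].
    eapply lpath_app; [|apply modvalley_lconversion]; eassumption.
  - apply (valley_below _ (m ++ b :: l)); [assumption|apply list_lt_head, Hm|].
    eapply lpath_app; [eassumption|econstructor; [|apply modvalley_lconversion; eassumption]].
    right; left; split; [apply Hd|apply (sim_E_r y); assumption].
Qed.

Lemma eq_cliff_reduction a b x y y1 z l : reducible_below (a :: b :: l) ->
  lconv a x y -> lstep b y y1 -> valley y1 z l ->
  exists l', list_lt l' (a :: b :: l) /\ valley x z l'.
Proof.
  intros IH [Hxy Hxa] [Hyy1 Hyb] Hv.
  destruct (cliff_decreasing y y1 x Hyy1 (E_sym _ _ Hxy)) as (d & Hcb & Hd).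
  destruct Hd as [->|[Hxd _]].
  - destruct (conv_below_lconversion a y x y1) as (m & Hc & Hm);
      [apply sim_sym, (sim_E_r x); assumption|apply conv_below_sym; assumption|].
    apply (valley_below _ (m ++ l)); [assumption|apply list_lt_drop_second, Hm|].
    eapply lpath_app; [|apply valley_lconversion]; eassumption.
  - destruct (conv_below_lconversion b y d y1) as (m & Hc & Hm);
      [apply sim_sym; assumption|apply conv_below_sym; assumption|].
    apply (valley_below _ (a :: m ++ l)); [assumption|apply (list_lt_app_l [a]), list_lt_head, Hm|].
    econstructor; [left; split; eassumption|].
    eapply lpath_app; [|apply valley_lconversion]; eassumption.
Qed.

Lemma valley_cons a x y z l : reducible_below (a :: l) ->
  lconvstep a x y -> valley y z l -> exists l', list_le l' (a :: l) /\ valley x z l'.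
Proof.
  intros IH Hs Hv.
  assert (weaken : (exists l', list_lt l' (a :: l) /\ valley x z l') ->
                   exists l', list_le l' (a :: l) /\ valley x z l')
    by (intros (l' & ? & ?); exists l'; split; [apply clos_t_clos_rt|]; assumption).
  destruct Hs as [Hf|[Hb|He]].
  - exists (a :: l); split; [apply rt_refl|apply valley_fwd with y; assumption].
  - destruct Hv as [y z l Hm|b y y1 z l Hf Hv].
    + destruct Hm as [y z l Hp|b y y1 z l He Hm].
      * exists (a :: l); split; [apply rt_refl|].
        do 2 constructor; econstructor; eassumption.
      * apply weaken, (back_cliff_reduction a b x y y1 z l IH Hb He Hm).
    + apply weaken, (peak_reduction a b x y y1 z l IH Hb Hf Hv).
  - destruct Hv as [y z l Hm|b y y1 z l Hf Hv].
    + exists (a :: l); split; [apply rt_refl|].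
      constructor; apply modvalley_eq with y; assumption.
    + apply weaken, (eq_cliff_reduction a b x y y1 z l IH He Hf Hv).
Qed.

Lemma lconversion_reducible l : reducible l.
Proof.
  induction l as [l IH] using (well_founded_induction (list_lt_wf gt_wf)).
  intros x z Hc; destruct Hc as [x|a x y z l' Hs Hc].
  - exists []; split; [apply rt_refl|do 3 constructor].
  - destruct (IH l' (list_lt_head a [] l' (Forall_nil _)) y z Hc) as (l2 & Hle & Hv).
    destruct (valley_cons a x y z l2) as (l3 & Hle3 & Hv3); [|assumption..|].
    + intros l'' Hlt; apply IH, list_lt_le_trans with (a :: l2); [|apply list_le_cons]; assumption.
    + exists l3; split; [eapply rt_trans; [|apply list_le_cons]|]; eassumption.
Qed.

Lemma sim_lconversion x y : sim x y -> exists l, lconversion x y l.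
Proof.
  induction 1 as [x y H|x|x y z _ [l1 H1] _ [l2 H2]].
  - exists [x]; econstructor; [right; right; split; [exact H|apply rt_refl]|constructor].
  - exists []; constructor.
  - exists (l1 ++ l2); eapply lpath_app; eassumption.
Qed.

Lemma conversion_lconversion x y :
  clos_refl_trans A (fun u v => R v u \/ R u v \/ sim u v) x y -> exists l, lconversion x y l.
Proof.
  induction 1 as [u v [H|[H|H]]|x|x y z _ [l1 H1] _ [l2 H2]].
  - exists [v]; econstructor; [right; left; split; [exact H|apply rt_refl]|constructor].
  - exists [u]; econstructor; [left; split; [exact H|apply rt_refl]|constructor].
  - now apply sim_lconversion.
  - exists []; constructor.
  - exists (l1 ++ l2); eapply lpath_app; eassumption.
Qed.

Lemma modvalley_joinable x z l : modvalley x z l ->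
  exists v, sim x v /\ clos_refl_trans A R z v.
Proof.
  induction 1 as [x z l Hp|a x y z l [Hxy _] _ (v & Hyv & Hzv)].
  - exists x; split; [apply rt_refl|].
    induction Hp as [|a x y z l [Hyx _] _ IH]; [apply rt_refl|].
    apply rt_trans with y; [|apply rt_step]; assumption.
  - exists v; split; [apply rt_trans with y; [apply rt_step|]|]; assumption.
Qed.

Lemma valley_joinable x z l : valley x z l ->
  exists u v, clos_refl_trans A R x u /\ sim u v /\ clos_refl_trans A R z v.
Proof.
  induction 1 as [x z l H|a x y z l [Hxy _] _ (u & v & Hyu & Huv & Hzv)].
  - destruct (modvalley_joinable x z l H) as (v & ?); exists x, v; split; [apply rt_refl|auto].
  - exists u, v; split; [apply rt_trans with y; [apply rt_step|]|]; auto.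
Qed.
End ChurchRosserModulo.

Theorem corollary3p9 (A : Type) (R E gt : A -> A -> Prop)
  (E_sym : forall x y, E x y -> E y x)
  (gt_trans : forall x y z, gt x y -> gt y z -> gt x z)
  (gt_wf : well_founded (fun x y => gt y x))
  (gt_compat : forall a b c d, sim A E a b -> gt b c -> sim A E c d -> gt a d)
  (hsd : source_decreasing_modulo A R E gt) :
  church_rosser_modulo A R E.
Proof.
  destruct hsd as [peak_decreasing cliff_decreasing].
  intros x y Hxy.
  destruct (conversion_lconversion A R E x y Hxy) as [l Hc].
  destruct (lconversion_reducible A R E gt E_sym gt_wf gt_compat
              peak_decreasing cliff_decreasing l x y Hc) as (l' & _ & Hv).
  exact (valley_joinable A R E x y l' Hv).
Qed.
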